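(* Consider an undiscounted ($\gamma=1$) MDP with finite state set $\mathcal{S}$, deterministic transitions $\delta:\{(s,a): s\in\mathcal{S}\setminus\mathcal{T}, a\in\mathbb{A}(s)\}\to\mathcal{S}$, a nonempty set $\mathcal{T}\subseteq\mathcal{S}$ of absorbing terminal states, and rewards $R(s,a)$. Assume every non-terminal state $s$ has a finite action set with $|\mathbb{A}(s)|\ge 2$, that from every state some terminal state is reachable, and that $\max_{s,a} R(s,a) < -\tau$ for a given $\tau>0$. For non-terminal $s$ let $\tau_s = \tau/\log|\mathbb{A}(s)|$ (the decoupled entropy temperature). Then the decoupled entropy-regularized Bellman equation $$V(s) = \tau_s \log \sum_{a\in\mathbb{A}(s)} \exp\!\Big(\frac{R(s,a) + V(\delta(s,a))}{\tau_s}\Big)\quad (s\notin\mathcal{T}),\qquad V(s)=0\quad (s\in\mathcal{T}),$$ has a real-valued (finite) solution $V:\mathcal{S}\to\mathbb{R}$.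
   Context: This is the maximum-entropy (soft) Bellman equation in which the entropy regularizer at each state is divided by its range $\log|\mathbb{A}(s)|$, i.e. the temperature at state $s$ is $\tau/\log|\mathbb{A}(s)|$; $\mathbb{A}(s)$ denotes the set of actions available at state $s$. *)

From HB Require Import structures.
From mathcomp Require Import all_boot all_order all_algebra.
From mathcomp Require Import all_classical all_reals all_analysis.
Set Implicit Arguments. Unset Strict Implicit. Unset Printing Implicit Defensive.
Import Order.TTheory GRing.Theory Num.Theory.
Local Open Scope ring_scope.

Definition mdp_step (S Act : finType) (T : {set S}) (Aset : S -> {set Act})
  (delta : S -> Act -> S) : rel S :=
  fun s s' => (s \notin T) && [exists a in Aset s, delta s a == s'].

Definition terminal_reachable (S Act : finType) (T : {set S})
  (Aset : S -> {set Act}) (delta : S -> Act -> S) : Prop :=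
  forall s : S, exists2 t, t \in T & connect (mdp_step T Aset delta) s t.

Definition dtemp (R : realType) (Act : finType) (tau : R) (A : {set Act}) : R :=
  tau / ln (#|A|%:R).

From HB Require Import structures.
From mathcomp Require Import all_boot all_order all_algebra.
From mathcomp Require Import all_classical all_reals all_analysis.
From mathcomp Require Import lra.
Import Order.TTheory GRing.Theory Num.Theory.
Set Implicit Arguments. Unset Strict Implicit.
Local Open Scope classical_set_scope.
Local Open Scope ring_scope.

(* The Bellman operator B is monotone, so (Knaster-Tarski) it has a fixed point
   as soon as it maps some box [L, U] of value functions into itself. The upper
   end is U = 0: with A(s) >= 2 actions, the decoupled temperature makes the
   log-sum-exp exceed the maximum by at most tau_s log|A(s)| = tau, which the
   reward bound R < -tau absorbs. The lower end is L s = - M k(s), where k(s)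
   is the length of a shortest path from s to T and M bounds every -R(s,a):
   following one step towards T already yields B L >= L. *)

Section LogSumExp.
Variables (R : realType) (Act : finType).

Definition logsumexp (c : R) (A : {set Act}) (x : Act -> R) : R :=
  c * ln (\sum_(a in A) expR (x a / c)).

Variables (c : R) (A : {set Act}) (a0 : Act).
Hypotheses (c_gt0 : 0 < c) (a0A : a0 \in A).

Lemma sum_expR_gt0 (x : Act -> R) : 0 < \sum_(a in A) expR (x a).
Proof.
rewrite (bigD1 a0) //=; apply: ltr_wpDr; last exact: expR_gt0.
by apply: sumr_ge0 => i _; exact: expR_ge0.
Qed.

Lemma logsumexp_ge (x : Act -> R) : x a0 <= logsumexp c A x.
Proof.
have -> : x a0 = c * ln (expR (x a0 / c)).
  by rewrite expRK mulrCA divff ?mulr1 // gt_eqF.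
rewrite ler_pM2l // ler_ln ?posrE ?expR_gt0 ?sum_expR_gt0 //.
rewrite (bigD1 a0) //= lerDl; apply: sumr_ge0 => i _; exact: expR_ge0.
Qed.

Lemma ler_logsumexp (x y : Act -> R) : (forall a, a \in A -> x a <= y a) ->
  logsumexp c A x <= logsumexp c A y.
Proof.
move=> xy; rewrite ler_pM2l // ler_ln ?posrE ?sum_expR_gt0 //.
by apply: ler_sum => a aA; rewrite ler_expR ler_pM2r ?invr_gt0 ?xy.
Qed.

Lemma logsumexp_le (x : Act -> R) (m : R) : (forall a, a \in A -> x a <= m) ->
  logsumexp c A x <= m + c * ln (#|A|%:R).
Proof.
move=> xm; have A_gt0 : (0 : R) < #|A|%:R.
  by rewrite ltr0n; apply/card_gt0P; exists a0.
apply: (@le_trans _ _ (c * ln (#|A|%:R * expR (m / c)))).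
  rewrite ler_pM2l // ler_ln ?posrE ?mulr_gt0 ?expR_gt0 ?sum_expR_gt0 //.
  apply: (@le_trans _ _ (\sum_(a in A) expR (m / c))).
    by apply: ler_sum => a aA; rewrite ler_expR ler_pM2r ?invr_gt0 ?xm.
  by rewrite sumr_const mulr_natl.
rewrite lnM ?posrE ?expR_gt0 // expRK mulrDr mulrCA divff ?mulr1 ?gt_eqF //.
by rewrite addrC.
Qed.

End LogSumExp.

Section BoxFixpoint.
Variables (R : realType) (S : Type) (F : (S -> R) -> S -> R) (L U : S -> R).
Hypotheses (F_mono : forall V W, (forall s, V s <= W s) -> forall s, F V s <= F W s)
  (L_le_U : forall s, L s <= U s) (L_le_FL : forall s, L s <= F L s)
  (FU_le_U : forall s, F U s <= U s).

Lemma exists_fixpoint_in_box : exists V : S -> R, forall s, V s = F V s.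
Proof.
pose post V := [/\ forall s, L s <= V s, forall s, V s <= U s
                 & forall s, V s <= F V s].
pose Vsup s := sup [set V s | V in post].
have post_L : post L by split.
have le_Vsup V s : post V -> V s <= Vsup s.
  move=> postV; apply: (ub_le_sup _); last by exists V.
  by exists (U s) => _ [W [_ WU _] <-].
have Vsup_le s y : (forall V, post V -> V s <= y) -> Vsup s <= y.
  by move=> Vy; apply: ge_sup => [|_ [V postV <-]]; [exists (L s), L | exact: Vy].
have Vsup_le_FVsup s : Vsup s <= F Vsup s.
  apply: Vsup_le => V postV; have [_ _ VFV] := postV.
  by apply: le_trans (VFV s) _; apply: F_mono => t; apply: le_Vsup.
have post_FVsup : post (F Vsup).
  split=> s.
  - exact: le_trans (le_Vsup L s post_L) (Vsup_le_FVsup s).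
  - apply: le_trans (FU_le_U s); apply: F_mono => t.
    by apply: Vsup_le => V [].
  - exact: F_mono.
by exists Vsup => s; apply/eqP; rewrite eq_le Vsup_le_FVsup le_Vsup.
Qed.

End BoxFixpoint.

Lemma exists_descending_rank (S Act : finType) (T : {set S})
    (Aset : S -> {set Act}) (delta : S -> Act -> S) :
  terminal_reachable T Aset delta ->
  exists k : S -> nat,
    forall s, s \notin T -> exists2 a, a \in Aset s & (k (delta s a) < k s)%N.
Proof.
move=> reachT; pose e := mdp_step T Aset delta.
pose reaches_in s n :=
  `[< exists p, [&& path e s p, last s p \in T & size p == n] >].
have reaches s : exists n, reaches_in s n.
  have [t tT /connectP [p ep tp]] := reachT s.
  by exists (size p); apply/asboolP; exists p; rewrite ep -tp tT eqxx.
exists (fun s => ex_minn (reaches s)) => s sT.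
case: ex_minnP => n /asboolP [[|s' p] /and3P [ep /= pT /eqP <-]] _.
  by rewrite (negbTE sT) in pT.
move: ep => /= /andP [/andP [_ /exists_inP [a aA /eqP da]] ep].
exists a; rewrite // da; case: ex_minnP => m _; apply.
by apply/asboolP; exists p; rewrite ep pT eqxx.
Qed.

Lemma dtemp_gt0 (R : realType) (Act : finType) (tau : R) (A : {set Act}) :
  0 < tau -> (2 <= #|A|)%N -> 0 < dtemp tau A.
Proof. by move=> tau_gt0 A2; rewrite divr_gt0 // ln_gt0 // ltr1n. Qed.

Lemma dtemp_mul_ln_card (R : realType) (Act : finType) (tau : R) (A : {set Act}) :
  (2 <= #|A|)%N -> dtemp tau A * ln (#|A|%:R) = tau.
Proof. by move=> A2; rewrite mulfVK // gt_eqF // ln_gt0 // ltr1n. Qed.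

Section SoftBellman.
Variables (R : realType) (S Act : finType) (T : {set S})
  (Aset : S -> {set Act}) (delta : S -> Act -> S) (rew : S -> Act -> R) (tau : R).
Hypotheses (tau_gt0 : 0 < tau) (Aset_ge2 : forall s, s \notin T -> (2 <= #|Aset s|)%N).

Definition soft_bellman (V : S -> R) (s : S) : R :=
  if s \in T then 0
  else logsumexp (dtemp tau (Aset s)) (Aset s) (fun a => rew s a + V (delta s a)).

Lemma exists_action s : s \notin T -> exists a, a \in Aset s.
Proof. by move=> sT; apply/card_gt0P; apply: leq_trans (Aset_ge2 sT). Qed.

Lemma soft_bellman_mono V W : (forall s, V s <= W s) ->
  forall s, soft_bellman V s <= soft_bellman W s.
Proof.
move=> VW s; rewrite /soft_bellman; case: ifP => // /negbT sT.
have [a0 a0A] := exists_action sT.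
by apply: (ler_logsumexp (dtemp_gt0 tau_gt0 (Aset_ge2 sT)) a0A) => a _;
  rewrite lerD2l.
Qed.

Lemma soft_bellman0_le0 :
  (forall s, s \notin T -> forall a, a \in Aset s -> rew s a < - tau) ->
  forall s, soft_bellman (fun=> 0) s <= 0.
Proof.
move=> rew_lt s; rewrite /soft_bellman; case: ifP => // /negbT sT.
have [a0 a0A] := exists_action sT.
apply: le_trans (logsumexp_le (dtemp_gt0 tau_gt0 (Aset_ge2 sT)) a0A (m := - tau) _) _.
  by move=> a aA; rewrite addr0 ltW ?rew_lt.
by rewrite dtemp_mul_ln_card ?addNr ?Aset_ge2.
Qed.

Lemma soft_bellman_subsolution (k : S -> nat) (M : R) :
  0 <= M -> (forall s a, - rew s a <= M) ->
  (forall s, s \notin T -> exists2 a, a \in Aset s & (k (delta s a) < k s)%N) ->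
  forall s, - (M * (k s)%:R) <= soft_bellman (fun t => - (M * (k t)%:R)) s.
Proof.
move=> M_ge0 rew_ge k_dec s; rewrite /soft_bellman; case: ifP => [_|/negbT sT].
  by rewrite oppr_le0 mulr_ge0.
have [a aA k_lt] := k_dec s sT.
apply: le_trans (logsumexp_ge (dtemp_gt0 tau_gt0 (Aset_ge2 sT)) aA _).
have : M * (k (delta s a))%:R + M <= M * (k s)%:R.
  by rewrite -[X in _ + X]mulr1 -mulrDr ler_wpM2l // natr1 ler_nat.
by have := rew_ge s a; lra.
Qed.

End SoftBellman.

Lemma exists_reward_bound (R : realType) (S Act : finType) (rew : S -> Act -> R) :
  exists2 M : R, 0 <= M & forall s a, - rew s a <= M.
Proof.
exists (\sum_s \sum_a `|rew s a|) => [|s a].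
  by apply: sumr_ge0 => s _; apply: sumr_ge0.
apply: le_trans (ler_norm _) _; rewrite normrN (bigD1 s) //= (bigD1 a) //=.
rewrite -addrA lerDl addr_ge0 ?sumr_ge0 // => t _.
exact: sumr_ge0.
Qed.

Theorem proposition1 (R : realType) (S Act : finType) (T : {set S})
  (Aset : S -> {set Act}) (delta : S -> Act -> S) (rew : S -> Act -> R)
  (tau : R) :
  0 < tau ->
  (exists t : S, t \in T) ->
  (forall s, s \notin T -> (2 <= #|Aset s|)%N) ->
  terminal_reachable T Aset delta ->
  (forall s, s \notin T -> forall a, a \in Aset s -> rew s a < - tau) ->
  exists V : S -> R,
    (forall s, s \in T -> V s = 0) /\
    (forall s, s \notin T ->
       V s = dtemp tau (Aset s) *
             ln (\sum_(a in Aset s)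
                   expR ((rew s a + V (delta s a)) / dtemp tau (Aset s)))).
Proof.
move=> tau_gt0 _ Aset_ge2 reachT rew_lt.
have [k k_dec] := exists_descending_rank reachT.
have [M M_ge0 rew_ge] := exists_reward_bound rew.
have [V fixV] : exists V, forall s, V s = soft_bellman T Aset delta rew tau V s.
  apply: (exists_fixpoint_in_box (L := fun s => - (M * (k s)%:R)) (U := fun=> 0)).
  - exact: (soft_bellman_mono delta rew tau_gt0 Aset_ge2).
  - by move=> s; rewrite oppr_le0 mulr_ge0.
  - exact: (soft_bellman_subsolution tau_gt0 Aset_ge2 M_ge0 rew_ge k_dec).
  - exact: (soft_bellman0_le0 delta tau_gt0 Aset_ge2 rew_lt).
exists V; split => s sT; rewrite fixV /soft_bellman.
  by rewrite sT.
by rewrite (negbTE sT).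
Qed.
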